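(* Suppose $f$ satisfies the separation property. Let $x\in\widetilde X$ with itinerary $\theta$, $t\geqslant0$, $n\geqslant 1$ and $(i_1,\dots,i_n)\in\{1,\dots,N\}^n$. Then $\theta_t\theta_{t+1}\dots\theta_{t+n-1}=i_1\dots i_n$ if and only if $f^{t+n}(x)\in A_{i_1\dots i_n}$.
   Context: Let $(X,d)$ be a compact metric space, $X_1,\dots,X_N$ ($N\geqslant 2$) non-empty pairwise disjoint open subsets with $X=\bigcup_i\overline{X_i}$, $\Delta:=\{x\in\overline{X_i}\cap\overline{X_j}:i\neq j\}$, and $f:X\to X$ a map such that each $f|_{X_i}$ admits a continuous extension $f_i:\overline{X_i}\to X$. Separation property: each $f_i$ injective and $f_i(\overline{X_i})\cap f_j(\overline{X_j})=\emptyset$ for $i\neq j$. $\widetilde X:=\bigcap_{n\geqslant 0}f^{-n}(X\setminus\Delta)$; the itinerary of $x\in\widetilde X$ is $\theta$ with $\theta_t=i$ iff $f^t(x)\in X_i$. For $A\subset X$ let $F_i(A):=\overline{f(A\cap X_i)}$ and $A_{i_1\dots i_n}:=F_{i_n}\circ\dots\circ F_{i_1}(X)$. *)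

From HB Require Import structures.
From mathcomp Require Import all_boot all_order all_algebra.
From mathcomp Require Import all_classical all_reals all_analysis.
Set Implicit Arguments. Unset Strict Implicit. Unset Printing Implicit Defensive.
Import Order.TTheory GRing.Theory Num.Theory.
Local Open Scope classical_set_scope.

Section Defs.
Context {T : topologicalType} {N : nat}.
Variables (Xs : 'I_N -> set T) (f : T -> T).

Definition Delta : set T :=
  [set x | exists i j : 'I_N, i != j /\ closure (Xs i) x /\ closure (Xs j) x].

Definition Xtilde : set T := [set x | forall n : nat, ~ Delta (iter n f x)].

Definition is_itinerary (x : T) (theta : nat -> 'I_N) : Prop :=
  forall (t : nat) (i : 'I_N), theta t = i <-> Xs i (iter t f x).

Definition Fmap (i : 'I_N) (A : set T) : set T := closure (f @` (A `&` Xs i)).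

Definition Aword (w : seq 'I_N) : set T := foldl (fun A i => Fmap i A) setT w.

Definition separation (fi : 'I_N -> T -> T) : Prop :=
  (forall i, {in closure (Xs i) &, injective (fi i)}) /\
  (forall i j, i != j -> fi i @` closure (Xs i) `&` fi j @` closure (Xs j) = set0).
End Defs.

From HB Require Import structures.
From mathcomp Require Import all_boot all_order all_algebra.
From mathcomp Require Import all_classical all_reals all_analysis.
Import Order.TTheory GRing.Theory Num.Theory.
Local Open Scope classical_set_scope.

(* By induction on the word, it suffices to show that for [A] closed and
   [y] in [X_j], the set [F_i A] contains [f y] exactly when [A y] and [j = i].
   On a compact Hausdorff space the continuous [f_i] maps closed sets to closed
   sets, so [F_i A] lies in [f_i (A ∩ closure X_i)]; disjointness of the images
   [f_i (closure X_i)] then forces [j = i], and injectivity of [f_i] brings the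
   preimage back to [y]. *)

Lemma closure_image_subset {X : topologicalType} {D S : set X} {g : X -> X} :
  compact [set: X] -> hausdorff_space X -> closed D ->
  {within D, continuous g} -> S `<=` D ->
  closure (g @` S) `<=` g @` closure S.
Proof.
move=> compactX hX cD gc SD.
have clS_D : closure S `<=` D by rewrite (closure_id D).1 //; exact: closureS.
have cpt_gS : compact (g @` closure S).
  apply: continuous_compact; first exact: continuous_subspaceW gc.
  exact: subclosed_compact (@closed_closure _ S) compactX _.
rewrite [X in _ `<=` X](closure_id _).1; last exact: compact_closed.
by apply/closureS/image_subset/subset_closure.
Qed.

Lemma Aword_closed {X : topologicalType} {N : nat} (Xs : 'I_N -> set X)
    (f : X -> X) (w : seq 'I_N) :
  closed (Aword Xs f w).
Proof.
elim/last_ind: w => [|w i _]; first exact: closedT.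
by rewrite /Aword foldl_rcons; exact: closed_closure.
Qed.

Lemma Aword_rcons {X : topologicalType} {N : nat} (Xs : 'I_N -> set X)
    (f : X -> X) (w : seq 'I_N) (i : 'I_N) :
  Aword Xs f (rcons w i) = Fmap Xs f i (Aword Xs f w).
Proof. by rewrite /Aword foldl_rcons. Qed.

Section Separation.
Variables (X : topologicalType) (N : nat) (Xs : 'I_N -> set X).
Variables (f : X -> X) (fi : 'I_N -> X -> X).
Hypothesis compactX : compact [set: X].
Hypothesis hausdorffX : hausdorff_space X.
Hypothesis fi_cont : forall i, {within closure (Xs i), continuous fi i}.
Hypothesis fi_ext : forall i x, Xs i x -> fi i x = f x.
Hypothesis sep : separation Xs fi.

Lemma Fmap_sub_image (i : 'I_N) (A : set X) :
  closed A -> Fmap Xs f i A `<=` fi i @` (A `&` closure (Xs i)).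
Proof.
move=> cA; rewrite /Fmap.
rewrite -(eq_imagel (fun z (Az : (A `&` Xs i) z) => fi_ext i z Az.2)).
have AXi_clXi : A `&` Xs i `<=` closure (Xs i) by move=> z [_ /subset_closure].
move=> b /(closure_image_subset compactX hausdorffX (@closed_closure _ _)
  (fi_cont i) AXi_clXi).
apply: image_subset; apply: subset_trans (@closureI _ _ _) _.
by rewrite -(closure_id A).1.
Qed.

Lemma Fmap_image (i j : 'I_N) (A : set X) (y : X) :
  closed A -> Xs j y -> Fmap Xs f i A (f y) <-> A y /\ j = i.
Proof.
move=> cA Xjy; split; last first.
  by case=> Ay <-; apply: subset_closure; exists y.
case/(Fmap_sub_image i A cA) => z [Az clXiz] fiz.
have clXjy : closure (Xs j) y by exact: subset_closure.
have ji : j = i.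
  case: (eqVneq j i) => // /(sep.2 j i); rewrite -subset0 => /(_ (f y)) [].
  by split; [exists y; last exact: fi_ext | exists z].
subst j; suff -> : y = z by [].
by apply: (sep.1 i); rewrite ?inE // fiz fi_ext.
Qed.

Lemma Aword_itinerary (x : X) (theta : nat -> 'I_N) (t : nat) (w : seq 'I_N) :
  is_itinerary Xs f x theta ->
  Aword Xs f w (iter (t + size w) f x) <->
  [seq theta (t + k)%N | k <- iota 0 (size w)] = w.
Proof.
move=> itin; elim/last_ind: w => [|w i IH]; first by split.
rewrite size_rcons -addn1 iotaD map_cat cats1 add0n addnA addn1 iterS.
rewrite Aword_rcons.
have Xs_theta : Xs (theta (t + size w)%N) (iter (t + size w) f x) by exact/itin.
rewrite (Fmap_image _ _ _ _ (Aword_closed Xs f w) Xs_theta) IH.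
split; first by case=> -> ->.
by move/eqP; rewrite eqseq_rcons => /andP[/eqP -> /eqP ->].
Qed.

End Separation.

Theorem corollary1 (R : realType) (X : metricType R) (N : nat)
  (Xs : 'I_N -> set X) (f : X -> X) (fi : 'I_N -> X -> X) :
  (2 <= N)%N ->
  compact [set: X] ->
  (forall i, open (Xs i)) ->
  (forall i, Xs i !=set0) ->
  (forall i j, i != j -> Xs i `&` Xs j = set0) ->
  \bigcup_(i in [set: 'I_N]) closure (Xs i) = [set: X] ->
  (forall i, {within closure (Xs i), continuous fi i}) ->
  (forall i x, Xs i x -> fi i x = f x) ->
  separation Xs fi ->
  forall (x : X) (theta : nat -> 'I_N), Xtilde Xs f x -> is_itinerary Xs f x theta ->
  forall (t n : nat) (w : n.-tuple 'I_N), (1 <= n)%N ->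
    [seq theta (t + k)%N | k <- iota 0 n] = val w <->
    Aword Xs f (val w) (iter (t + n) f x).
Proof.
(* [Xtilde Xs f x] only serves to make the itinerary exist, which is assumed. *)
move=> _ cX _ _ _ _ fi_cont fi_ext sep x theta _ itin t n w _.
have := Aword_itinerary _ _ _ _ _ cX (@metric_hausdorff R X) fi_cont fi_ext sep
  x theta t (val w) itin.
by rewrite size_tuple; exact: iff_sym.
Qed.
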